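(* In the setting described in the context, for every vertex $v\in V_L$ of $\mathfrak L_1$ the relation $\sim_v$ is an equivalence relation on $B_L(\Lambda_1,v)$.
   Context: $\mathbb Z_+=\{0,1,2,\dots\}$, $\mathbb N=\{1,2,\dots\}$. A $\lambda$-graph system $\mathfrak L=(V,E,\lambda,\iota)$ over a finite alphabet $\Sigma$ consists of finite nonempty pairwise disjoint vertex sets $V_l$ ($l\in\mathbb Z_+$); finite pairwise disjoint edge sets $E_{l,l+1}$, each $e\in E_{l,l+1}$ having a source $s(e)\in V_l$ and a terminal $t(e)\in V_{l+1}$; a labeling map $\lambda:E\to\Sigma$; and surjections $\iota:V_{l+1}\to V_l$; such that every vertex is the source of some edge, every vertex in $V_l$ ($l\ge1$) is the terminal of some edge, and (local property) for all $l\ge1$, $u\in V_{l-1}$, $v\in V_{l+1}$ there is a label-preserving bijection between $\{e\in E_{l,l+1}: \iota(s(e))=u,\ t(e)=v\}$ and $\{e\in E_{l-1,l}: s(e)=u,\ t(e)=\iota(v)\}$. Left-resolving: $t(e)=t(f)$, $\lambda(e)=\lambda(f)$ imply $e=f$. $\Omega_{\mathfrak L}=\{(u^l)_{l}\in\prod_l V_l: \iota(u^{l+1})=u^l\}$. $E_{\mathfrak L}$ = set of $(u,\alpha,w)\in\Omega_{\mathfrak L}\times\Sigma\times\Omega_{\mathfrak L}$ such that for each $l$ some $e\in E_{l,l+1}$ has $s(e)=u^l$, $t(e)=w^{l+1}$, $\lambda(e)=\alpha$. $X_{\mathfrak L}$ = set of $x=(\alpha_i,u_i)_{i\in\mathbb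 N}$ in $\Sigma\times\Omega_{\mathfrak L}$ with $(u_i,\alpha_{i+1},u_{i+1})\in E_{\mathfrak L}$ for all $i$ and $(u_0,\alpha_1,u_1)\in E_{\mathfrak L}$ for some $u_0$; relative product topology; $\sigma_{\mathfrak L}$ the left shift. For such $x$: $x_{[k,\infty)}=(\alpha_i,u_i)_{i\ge k}$; $\pi_{\mathfrak L}(x)=(\alpha_i)_{i\in\mathbb N}$, $\pi_{\mathfrak L}(x)_{[1,k]}=(\alpha_1,\dots,\alpha_k)$; $v^l_n(x)$ denotes the $l$-th coordinate $u_n^l$ of $u_n$. $X_\Lambda=\pi_{\mathfrak L}(X_{\mathfrak L})$, $B_k(X_\Lambda)$ its words of length $k$. Setting: $\mathfrak L_1,\mathfrak L_2$ are left-resolving $\lambda$-graph systems; write $\pi_i=\pi_{\mathfrak L_i}$, $\Lambda_i$ for the presented subshifts. $\psi_0:X_{\mathfrak L_1}\to X_{\mathfrak L_2}$ is a continuous surjection with $\sigma_{\mathfrak L_2}\circ\psi_0=\psi_0\circ\sigma_{\mathfrak L_1}$, and $1\le l\le L$ are integers such that (a) $\psi_0(x)=\psi_0(x')$ implies $x_{[l,\infty)}=x'_{[l,\infty)}$; (b) there is a map $\Psi:B_L(X_{\Lambda_1})\to B_l(X_{\Lambda_2})$ with $\pi_2(\psi_0(x))_{[1,l]}=\Psi(\pi_1(x)_{[1,L]})$ for all $x\in X_{\mathfrak L_1}$. (This is the situation obtained from an $(\mathfrak L_1,\mathfrak L_2)$-conjugacy of two-sided subshifts.) For $v\in V_L$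 (vertices of $\mathfrak L_1$), $B_L(\Lambda_1,v)$ is the set of $\mu\in B_L(X_{\Lambda_1})$ such that $\mu=\pi_1(x)_{[1,L]}$ for some $x\in X_{\mathfrak L_1}$ with $v^L_L(x)=v$. For $\mu,\mu'\in B_L(\Lambda_1,v)$, $\mu\sim_v\mu'$ means: there exist $x,x'\in X_{\mathfrak L_1}$ with $\pi_1(x)_{[1,L]}=\mu$, $\pi_1(x')_{[1,L]}=\mu'$, $v^L_L(x)=v^L_L(x')=v$ and $\psi_0(x)=\psi_0(x')$. *)

From mathcomp Require Import all_boot.
Set Implicit Arguments. Unset Strict Implicit. Unset Printing Implicit Defensive.

(* A lambda-graph system over a finite alphabet Sigma.
   V l = vertex set V_l, E l = edge set E_{l,l+1}; disjointness is automatic. *)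
Record lgs (Sigma : finType) := LGS {
  V : nat -> finType;
  E : nat -> finType;
  src : forall l, E l -> V l;
  tgt : forall l, E l -> V l.+1;
  lab : forall l, E l -> Sigma;
  iot : forall l, V l.+1 -> V l;
  V_nonempty : forall l, 0 < #|V l|;
  iot_surj : forall l (v : V l), exists w : V l.+1, iot w = v;
  src_surj : forall l (v : V l), exists e : E l, src e = v;
  tgt_surj : forall l (v : V l.+1), exists e : E l, tgt e = v;
  (* local property, written for l+1 (l >= 0): u in V_l, v in V_{l+2} *)
  local_prop : forall l (u : V l) (v : V l.+2),
    exists f : {e : E l.+1 | iot (src e) = u /\ tgt e = v} ->
               {e : E l | src e = u /\ tgt e = iot v},
      bijective f /\ forall e, lab (proj1_sig (f e)) = lab (proj1_sig e)
}.

Arguments V {Sigma} l0 l : rename.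
Arguments E {Sigma} l0 l : rename.

Definition left_resolving (S : finType) (G : lgs S) : Prop :=
  forall l (e f : E G l), tgt e = tgt f -> lab e = lab f -> e = f.

Record omega (S : finType) (G : lgs S) := Omega {
  ou :> forall l, V G l;
  ou_compat : forall l, iot (ou l.+1) = ou l
}.

Definition inEL (S : finType) (G : lgs S) (u : omega G) (a : S) (w : omega G) : Prop :=
  forall l, exists e : E G l, src e = u l /\ tgt e = w l.+1 /\ lab e = a.

(* Sequences x : nat -> S * omega G, where x n stands for (alpha_{n+1}, u_{n+1}). *)
Definition inX (S : finType) (G : lgs S) (x : nat -> S * omega G) : Prop :=
  (forall n, inEL (x n).2 (x n.+1).1 (x n.+1).2) /\
  exists u0 : omega G, inEL u0 (x 0).1 (x 0).2.

Definition XL (S : finType) (G : lgs S) := {x : nat -> S * omega G | inX x}.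

Lemma inX_shift (S : finType) (G : lgs S) (x : nat -> S * omega G) :
  inX x -> inX (fun n => x n.+1).
Proof. by case=> H _; split; [move=> n; apply: H | exists (x 0).2; apply: H]. Qed.

Definition sigmaL (S : finType) (G : lgs S) (x : XL G) : XL G :=
  exist _ (fun n => proj1_sig x n.+1) (inX_shift (proj2_sig x)).

Definition word (S : finType) (G : lgs S) (x : XL G) (k : nat) : seq S :=
  [seq (proj1_sig x i).1 | i <- iota 0 k].

(* v^l_n(x), for n >= 1 *)
Definition vert (S : finType) (G : lgs S) (x : XL G) (l n : nat) : V G l :=
  ou (proj1_sig x n.-1).2 l.

(* agreement on the basic cylinder of depth N (product of discrete topologies) *)
Definition agree (S : finType) (G : lgs S) (N : nat) (x x' : nat -> S * omega G) : Prop :=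
  forall i, i < N -> (x i).1 = (x' i).1 /\
    forall l, l < N -> ou (x i).2 l = ou (x' i).2 l.

(* continuity for the relative product topology *)
Definition continuousX (S1 S2 : finType) (G1 : lgs S1) (G2 : lgs S2)
  (f : XL G1 -> XL G2) : Prop :=
  forall (x : XL G1) (n : nat), exists N, forall x' : XL G1,
    agree N (proj1_sig x) (proj1_sig x') -> agree n (proj1_sig (f x)) (proj1_sig (f x')).

Definition BLv (S : finType) (G : lgs S) (L : nat) (v : V G L) (mu : seq S) : Prop :=
  exists x : XL G, word x L = mu /\ vert x L L = v.

Definition simv (S1 S2 : finType) (G1 : lgs S1) (G2 : lgs S2)
  (psi0 : XL G1 -> XL G2) (L : nat) (v : V G1 L) (mu mu' : seq S1) : Prop :=
  exists x x' : XL G1, [/\ word x L = mu, word x' L = mu',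
    vert x L L = v, vert x' L L = v & psi0 x = psi0 x'].

(* Only transitivity has content.  Given psi0 x1 = psi0 x2 and psi0 y2 = psi0 y3, where
   x1 and y2 both pass through v at level L, left-resolvingness lets the vertices of y2 be
   pulled back edge by edge along the first L labels of x1; this splices the word of x1
   onto the tail of y2 and gives a point z with word mu1 ending at v.  Then psi0 z = psi0 y2:
   the first l labels of the images are Psi mu1 = Psi mu2, the later ones only depend on
   labels of index at least l, where condition (a) makes z, x1, x2 and y2 agree; the images
   agree eventually by shift-equivariance, and in a left-resolving system labels together
   with a tail determine a point. *)
From Stdlib Require Import ProofIrrelevance FunctionalExtensionality.
From mathcomp Require Import all_boot.
Set Implicit Arguments. Unset Strict Implicit. Unset Printing Implicit Defensive.

Section LambdaGraphPoints.
Variables (S : finType) (G : lgs S).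

Lemma omega_ext (w w' : omega G) : (forall l, w l = w' l) -> w = w'.
Proof.
case: w w' => f cf [g cg] /= fg.
have fgE : f = g by apply: functional_extensionality_dep.
by subst g; f_equal; apply: proof_irrelevance.
Qed.

Lemma XL_ext (x y : XL G) : (forall i, proj1_sig x i = proj1_sig y i) -> x = y.
Proof.
case: x y => f pf [g pg] /= fg.
have fgE : f = g by apply: functional_extensionality.
by subst g; f_equal; apply: proof_irrelevance.
Qed.

Lemma omega_eq_le (w w' : omega G) n : w n = w' n -> forall m, m <= n -> w m = w' m.
Proof.
elim: n => [|n IH] wn m; first by rewrite leqn0 => /eqP ->.
rewrite leq_eqVlt => /orP [/eqP -> // | ]; rewrite ltnS; apply: IH.
by rewrite -(ou_compat w) -(ou_compat w') wn.
Qed.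

(* Each step up uses the local property at (src e, w (l+2)). *)
Lemma in_edge_every_level (w : omega G) a :
  (exists e : E G 0, tgt e = w 1 /\ lab e = a) ->
  forall l, exists e : E G l, tgt e = w l.+1 /\ lab e = a.
Proof.
move=> e0; elim=> [//|l [e [te le]]].
have [f [[g _ gK] labf]] := local_prop (src e) (w l.+2).
have e_in : src e = src e /\ tgt e = iot (w l.+2) by rewrite ou_compat.
pose e' := exist (fun d : E G l => src d = src e /\ tgt d = iot (w l.+2)) e e_in.
exists (proj1_sig (g e')); have [_ ->] := proj2_sig (g e'); split=> //.
by rewrite -le -labf gK.
Qed.

Definition path_from (k : nat) (f : nat -> S * omega G) : Prop :=
  forall i, k <= i -> inEL (f i).2 (f i.+1).1 (f i.+1).2.

Hypothesis lrG : left_resolving G.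

Lemma inEL_src (u w : omega G) a l (e : E G l) :
  inEL u a w -> tgt e = w l.+1 -> lab e = a -> src e = u l.
Proof.
move=> uw te le; have [e' [<- [te' le']]] := uw l.
by congr src; apply: lrG; rewrite ?te ?te' ?le ?le'.
Qed.

Lemma inEL_src_unique (u u' w : omega G) a : inEL u a w -> inEL u' a w -> u = u'.
Proof.
move=> uw u'w; apply: omega_ext => l; have [e [<- [te le]]] := uw l.
exact: inEL_src u'w te le.
Qed.

Lemma inEL_exists_src (w : omega G) a :
  (exists e : E G 0, tgt e = w 1 /\ lab e = a) -> exists u : omega G, inEL u a w.
Proof.
move=> e0.
have in_edge l : exists e : E G l, (tgt e == w l.+1) && (lab e == a).
  by have [e [te le]] := in_edge_every_level e0 l; exists e; rewrite te le !eqxx.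
pose e l := xchoose (in_edge l).
have eP l : tgt (e l) = w l.+1 /\ lab (e l) = a.
  by have /andP [/eqP -> /eqP ->] := xchooseP (in_edge l).
(* The local property pushes e (l+1) down to an edge into w (l+1) labelled a, i.e. to e l. *)
have src_compat l : iot (src (e l.+1)) = src (e l).
  have [f [_ labf]] := local_prop (iot (src (e l.+1))) (w l.+2).
  have e_in : iot (src (e l.+1)) = iot (src (e l.+1)) /\ tgt (e l.+1) = w l.+2.
    by split=> //; case: (eP l.+1).
  pose d := exist (fun d => iot (src d) = iot (src (e l.+1)) /\ tgt d = w l.+2) _ e_in.
  move: (proj1_sig (f d)) (proj2_sig (f d)) (labf d) => d' [sd td] ld.
  rewrite ou_compat in td; rewrite /= (proj2 (eP _)) in ld; rewrite -sd.
  by have [te le] := eP l; congr src; apply: lrG; rewrite ?td ?ld ?te ?le.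
exists (Omega src_compat) => l; exists (e l); split=> //; exact: eP.
Qed.

Lemma XL_splice (x : XL G) k (f : nat -> S * omega G) :
  path_from k f -> (f k).1 = (proj1_sig x k).1 ->
  ou (f k).2 k.+1 = ou (proj1_sig x k).2 k.+1 ->
  exists z : XL G, (forall i, i <= k -> (proj1_sig z i).1 = (proj1_sig x i).1) /\
                   (forall i, k <= i -> proj1_sig z i = f i).
Proof.
case: x => x [xpath [u0 u0x]] /=.
elim: k f => [|k IH] f fpath lab_fk vert_fk.
  have [e [_ [te le]]] := u0x 0.
  have [u uf] : exists u, inEL u (f 0).1 (f 0).2.
    by apply: inEL_exists_src; exists e; rewrite te vert_fk le lab_fk.
  have fX : inX f by split; [move=> i; apply: fpath | exists u].
  by exists (exist _ f fX); split=> [i|//]; rewrite leqn0 => /eqP ->.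
have [u uf] : exists u, inEL u (f k.+1).1 (f k.+1).2.
  have [e [_ [te le]]] := xpath k 0.
  apply: inEL_exists_src; exists e; rewrite lab_fk le te.
  by rewrite (omega_eq_le vert_fk).
have u_k : ou u k.+1 = ou (x k).2 k.+1.
  have [e [<- [te le]]] := xpath k k.+1.
  by symmetry; apply: (inEL_src uf); rewrite ?te ?le.
pose f' i := if i == k then ((x k).1, u) else f i.
have f'path : path_from k f'.
  move=> i; rewrite leq_eqVlt => /orP [/eqP <- | ki].
    by rewrite /f' eqxx (gtn_eqF (ltnSn k)).
  by rewrite /f' (gtn_eqF ki) (gtn_eqF (ltnW ki : k < i.+1)); apply: fpath.
have f'k : f' k = ((x k).1, u) by rewrite /f' eqxx.
have [z [zlab ztail]] :=
  IH f' f'path (congr1 fst f'k) (etrans (congr1 (fun p => ou p.2 k.+1) f'k) u_k).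
exists z; split.
  move=> i; rewrite leq_eqVlt => /orP [/eqP -> | ]; last by rewrite ltnS; apply: zlab.
  by rewrite ztail // /f' gtn_eqF.
by move=> i ki; rewrite ztail ?(ltnW ki) // /f' gtn_eqF.
Qed.

Lemma XL_eq_from_tail (x y : XL G) n :
  (forall i, (proj1_sig x i).1 = (proj1_sig y i).1) ->
  (forall i, n <= i -> proj1_sig x i = proj1_sig y i) -> x = y.
Proof.
move=> lab_xy tail; apply: XL_ext.
have [xpath _] := proj2_sig x; have [ypath _] := proj2_sig y.
suff eq_from d i : n <= i + d -> proj1_sig x i = proj1_sig y i.
  by move=> i; apply: (eq_from n); rewrite leq_addl.
elim: d i => [|d IH] i hi; first by apply: tail; rewrite addn0 in hi.
have next : proj1_sig x i.+1 = proj1_sig y i.+1 by apply: IH; rewrite addSn -addnS.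
have xi := xpath i; have := ypath i; rewrite -next => yi.
move: (proj1_sig x i) (proj1_sig y i) (lab_xy i) xi yi => [a u] [b u'] /= <- xi yi.
by rewrite (inEL_src_unique xi yi).
Qed.

Lemma nth_word (x : XL G) k i d : i < k -> nth d (word x k) i = (proj1_sig x i).1.
Proof. by move=> ik; rewrite /word (nth_map 0) ?size_iota // nth_iota. Qed.

Lemma eq_word (x y : XL G) k :
  (forall i, i < k -> (proj1_sig x i).1 = (proj1_sig y i).1) -> word x k = word y k.
Proof. by move=> xy; apply/eq_in_map => i; rewrite mem_iota add0n; apply: xy. Qed.

Lemma iter_sigmaL (x : XL G) j i : proj1_sig (iter j (@sigmaL _ G) x) i = proj1_sig x (i + j).
Proof. by elim: j i => [|j IH] i; rewrite ?addn0 //= IH addnS. Qed.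

End LambdaGraphPoints.

Section ShiftCommutingMaps.
Variables (S1 S2 : finType) (G1 : lgs S1) (G2 : lgs S2) (psi0 : XL G1 -> XL G2).
Hypothesis psi0_shift : forall x, psi0 (sigmaL x) = sigmaL (psi0 x).

Lemma psi0_iter j x : psi0 (iter j (@sigmaL _ G1) x) = iter j (@sigmaL _ G2) (psi0 x).
Proof. by elim: j x => [|j IH] x //=; rewrite psi0_shift IH. Qed.

Lemma psi0_tail (x y : XL G1) n :
  (forall i, n <= i -> proj1_sig x i = proj1_sig y i) ->
  forall i, n <= i -> proj1_sig (psi0 x) i = proj1_sig (psi0 y) i.
Proof.
move=> tail i ni.
have shifted : iter n (@sigmaL _ G1) x = iter n (@sigmaL _ G1) y.
  by apply: XL_ext => j; rewrite !iter_sigmaL tail // leq_addl.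
have := f_equal (fun p => proj1_sig (psi0 p) (i - n)) shifted.
by rewrite /= !psi0_iter !iter_sigmaL subnK.
Qed.

Variables (Psi : seq S1 -> seq S2) (l L : nat).
Hypothesis l_gt0 : 0 < l.
Hypothesis psi0_word : forall x, word (psi0 x) l = Psi (word x L).

Lemma psi0_label_eq (x y : XL G1) i :
  (forall j, j < L -> (proj1_sig x (j + i)).1 = (proj1_sig y (j + i)).1) ->
  (proj1_sig (psi0 x) i).1 = (proj1_sig (psi0 y) i).1.
Proof.
move=> xy; pose d := (proj1_sig (psi0 x) 0).1.
have := nth_word (iter i (@sigmaL _ G2) (psi0 x)) d l_gt0.
have := nth_word (iter i (@sigmaL _ G2) (psi0 y)) d l_gt0.
rewrite !iter_sigmaL !add0n => <- <-; rewrite -!psi0_iter !psi0_word.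
by congr (nth _ (Psi _) 0); apply: eq_word => j jL; rewrite !iter_sigmaL xy.
Qed.

Lemma psi0_eq (x y : XL G1) n : left_resolving G2 ->
  word (psi0 x) l = word (psi0 y) l ->
  (forall i, l <= i -> (proj1_sig x i).1 = (proj1_sig y i).1) ->
  (forall i, n <= i -> proj1_sig x i = proj1_sig y i) -> psi0 x = psi0 y.
Proof.
move=> lr2 head lab_xy tail; apply: (XL_eq_from_tail lr2 (n := n)); last exact: psi0_tail.
move=> i; case: (ltnP i l) => [il | li].
  pose d := (proj1_sig (psi0 x) 0).1.
  by rewrite -(nth_word _ d il) head nth_word.
by apply: psi0_label_eq => j _; apply: lab_xy; rewrite (leq_trans li) ?leq_addl.
Qed.

End ShiftCommutingMaps.

Theorem lemma7p4 (S1 S2 : finType) (G1 : lgs S1) (G2 : lgs S2)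
  (lr1 : left_resolving G1) (lr2 : left_resolving G2)
  (psi0 : XL G1 -> XL G2)
  (psi0_cont : continuousX psi0)
  (psi0_surj : forall y : XL G2, exists x, psi0 x = y)
  (psi0_shift : forall x, psi0 (sigmaL x) = sigmaL (psi0 x))
  (l L : nat) (hl : 1 <= l) (hlL : l <= L)
  (ha : forall x x' : XL G1, psi0 x = psi0 x' ->
          forall n, l <= n -> proj1_sig x n.-1 = proj1_sig x' n.-1)
  (hb : exists Psi : seq S1 -> seq S2,
          forall x : XL G1, word (psi0 x) l = Psi (word x L)) :
  forall v : V G1 L,
    (forall mu, BLv v mu -> simv psi0 v mu mu) /\
    (forall mu mu', simv psi0 v mu mu' -> simv psi0 v mu' mu) /\
    (forall mu1 mu2 mu3, simv psi0 v mu1 mu2 -> simv psi0 v mu2 mu3 ->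
                          simv psi0 v mu1 mu3).
Proof.
move=> v; split; [|split].
- by move=> mu [x [wx vx]]; exists x, x.
- by move=> mu mu' [x [x' [w w' vx vx' e]]]; exists x', x.
move=> mu1 mu2 mu3 [x1 [x2 [w1 w2 v1 v2 e12]]] [y2 [y3 [w2' w3 v2' v3 e23]]].
have [Psi psi0_word] := hb.
have LE : (L.-1).+1 = L by rewrite prednK // (leq_trans hl).
have lab_x1y2 i : l.-1 <= i -> i < L -> (proj1_sig x1 i).1 = (proj1_sig y2 i).1.
  move=> li iL; rewrite (ha _ _ e12 i.+1); last by rewrite -(prednK hl).
  pose d := (proj1_sig y2 0).1.
  by rewrite /= -(nth_word x2 d iL) -(nth_word y2 d iL) w2 w2'.
have [z [zlab ztail]] : exists z : XL G1,
    (forall i, i <= L.-1 -> (proj1_sig z i).1 = (proj1_sig x1 i).1) /\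
    (forall i, L.-1 <= i -> proj1_sig z i = proj1_sig y2 i).
  apply: (XL_splice lr1) => //; first by move=> i _; apply: (proj1 (proj2_sig y2)).
    by rewrite lab_x1y2 // ?LE // -!subn1 leq_sub2r.
  by rewrite LE; move: v1 v2'; rewrite /vert => -> ->.
have wz : word z L = mu1.
  by rewrite -w1; apply: eq_word => i iL; apply: zlab; rewrite -ltnS LE.
exists z, y3; split=> //; first by rewrite /vert ztail.
rewrite -e23; apply: (psi0_eq psi0_shift hl psi0_word (n := L.-1)) => //.
  by rewrite !psi0_word wz -w1 w2' -w2 -!psi0_word e12.
move=> i li; case: (leqP L.-1 i) => [Li | iL]; first by rewrite ztail.
rewrite zlab ?(ltnW iL) // lab_x1y2 //; first exact: leq_trans (leq_pred l) li.
exact: leq_trans iL (leq_pred L).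
Qed.
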